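(* Let $d\ge1$. Let $M$ be a random symmetric $d\times d$ matrix whose entries $M_{a,b}$, $a\ge b$, are independent and uniform on $\{-1,+1\}$. Let $j$ be independent of $M$ and uniform on $\{\lceil d/2\rceil,\dots,d\}$. Let $S=f(M)$, where $f$ is any deterministic function taking values in bit strings of length at most $d^2/128$. Let $\hat M_j=g(S,j)\in\mathbb R^d$ for an arbitrary deterministic function $g$. Then $$\mathbb E_{M,j}\Big[\big\|[\hat M_j-M_j]\big\|^2\Big]\ge\frac d8,$$ where $M_j$ denotes the $j$-th column of $M$.
   Context: For a scalar $w$, $[w]=\min\{1,\max\{-1,w\}\}$ denotes clipping to $[-1,1]$. For a vector $\mathbf w=(w_1,\dots,w_d)$, $[\mathbf w]=([w_1],\dots,[w_d])$. *)

From HB Require Import structures.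
From mathcomp Require Import all_boot all_order all_algebra.
Set Implicit Arguments. Unset Strict Implicit. Unset Printing Implicit Defensive.
Import Order.TTheory GRing.Theory Num.Theory.
Local Open Scope ring_scope.

(* clipping [w] = min 1 (max (-1) w) *)
Definition clip (R : realFieldType) (w : R) : R := Num.min 1 (Num.max (-1) w).

(* Uniform choice of a symmetric pattern = independent uniform signs for a >= b. *)
Definition sym_pattern (d : nat) : {set {ffun 'I_d * 'I_d -> bool}} :=
  [set x : {ffun 'I_d * 'I_d -> bool} | [forall a, forall b, x (a, b) == x (b, a)]].

Definition sign_mx (R : realFieldType) (d : nat) (x : {ffun 'I_d * 'I_d -> bool})
  : 'M[R]_d := \matrix_(a, b) (if x (a, b) then 1 else -1).

(* admissible column indices: 0-based i with ceil(d/2) <= i+1 <= d *)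
Definition col_range (d : nat) : {set 'I_d} := [set i : 'I_d | uphalf d <= i.+1]%N.

Definition exp_err (R : realFieldType) (d : nat)
  (f : 'M[R]_d -> seq bool) (g : seq bool -> 'I_d -> 'cV[R]_d) : R :=
  (#|sym_pattern d|%:R)^-1 * (#|col_range d|%:R)^-1 *
  \sum_(x in sym_pattern d) \sum_(j in col_range d)
     \sum_(i < d) (clip (g (f (sign_mx R x)) j i ord0 - sign_mx R x i j)) ^+ 2.

From HB Require Import structures.
From mathcomp Require Import all_boot all_order all_algebra.
From mathcomp Require Import zify ring lra.
Set Implicit Arguments. Unset Strict Implicit. Unset Printing Implicit Defensive.
Import Order.TTheory GRing.Theory Num.Theory.
Local Open Scope ring_scope.

(* The prediction for column j guesses a sign for every entry (i, j), and a
   wrongly guessed entry costs at least 1 in the clipped squared error.  On the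
   m free cells (i <= j, j in the column range) the number H of wrong guesses
   of a FIXED guess satisfies E[2^-H] = (3/4)^m, with m ~ 3d^2/8.  The actual
   guess depends on M only through one of at most 2^(L+1) messages, so
   E[2^-H] <= 2^(L+1) (3/4)^m, and the convexity bound
   T + 2 <= H + 2^(T+1) 2^-H gives E[H] >= T + 2 - 2^(T+L+2) (3/4)^m, which
   for T ~ d^2/16 and L <= d^2/128 exceeds (number of columns) * d / 8. *)

Section SymmetricPatterns.

Variable d : nat.
Implicit Types (p : 'I_d * 'I_d) (x : {ffun 'I_d * 'I_d -> bool}).

Definition upper : {pred 'I_d * 'I_d} := [pred p : 'I_d * 'I_d | (p.1 <= p.2)%N].

Definition sort_pair p : 'I_d * 'I_d := if (p.1 <= p.2)%N then p else (p.2, p.1).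

Lemma sort_pair_upper p : sort_pair p \in upper.
Proof. by rewrite /sort_pair; case: leqP => [|/ltnW]; rewrite inE. Qed.

Lemma sort_pair_id p : p \in upper -> sort_pair p = p.
Proof. by rewrite /sort_pair inE => ->. Qed.

Lemma sort_pairC (a b : 'I_d) : sort_pair (a, b) = sort_pair (b, a).
Proof.
rewrite /sort_pair /=; case: (ltngtP a b) => // eq_ab.
by rewrite (val_inj eq_ab).
Qed.

Definition upper_cell p : {q in upper} := exist _ (sort_pair p) (sort_pair_upper p).

Definition symmetrize (y : {ffun {q in upper} -> bool}) : {ffun 'I_d * 'I_d -> bool} :=
  [ffun p => y (upper_cell p)].

Lemma symmetrize_val y (u : {q in upper}) : symmetrize y (val u) = y u.
Proof.
by rewrite ffunE; congr (y _); apply: val_inj; rewrite /= sort_pair_id ?(valP u).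
Qed.

Lemma symmetrize_inj : injective symmetrize.
Proof. by move=> y1 y2 eq_y; apply/ffunP => u; rewrite -!symmetrize_val eq_y. Qed.

Lemma sym_patternE : sym_pattern d = [set symmetrize y | y in setT].
Proof.
apply/setP => x; rewrite inE; apply/forallP/imsetP => [x_sym | [y _ ->] a].
- exists [ffun u => x (val u)] => //; apply/ffunP => -[a b].
  rewrite !ffunE /= /sort_pair /=; case: ifP => // _.
  by move/forallP/(_ a)/eqP: (x_sym b).
- apply/forallP => b; rewrite !ffunE; apply/eqP; congr (y _).
  by apply: val_inj; rewrite /= sort_pairC.
Qed.

Lemma card_sym_pattern : #|sym_pattern d| = (2 ^ #|{: {q in upper}}|)%N.
Proof.
rewrite sym_patternE card_imset; last exact: symmetrize_inj.
by rewrite cardsT card_ffun card_bool.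
Qed.

Lemma sum_sym_pattern_prod (R : comNzRingType) (P : pred ('I_d * 'I_d))
    (w : 'I_d * 'I_d -> bool -> R) :
  \sum_(x in sym_pattern d) \prod_(p in upper | P p) w p (x p) =
  \prod_(p in upper) (if P p then w p true + w p false else 2).
Proof.
rewrite sym_patternE big_imset /=; last by move=> y1 y2 _ _; apply: symmetrize_inj.
pose G (u : {q in upper}) c := if P (val u) then w (val u) c else 1.
transitivity (\sum_(y : {ffun {q in upper} -> bool}) \prod_u G u (y u)).
  apply: eq_big => [y|y _]; first by rewrite inE.
  rewrite big_sub_cond big_mkcond /=.
  by apply: eq_bigr => u _; rewrite symmetrize_val.
rewrite -bigA_distr_bigA [RHS]big_sub /=; apply: eq_bigr => u _.
by rewrite big_bool /G; case: ifP.
Qed.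

End SymmetricPatterns.

Arguments upper d : clear implicits.

Definition mismatch d (P : pred ('I_d * 'I_d)) (b : 'I_d * 'I_d -> bool)
    (x : {ffun 'I_d * 'I_d -> bool}) : nat :=
  \sum_(p in upper d | P p) (x p != b p).

(* Each upper-triangle cell selected by P disagrees with the fixed guess b for
   exactly one of its two values, so it contributes a factor (1 + 1/2) / 2. *)
Lemma sum_halfpow_mismatch (R : numFieldType) d (P : pred ('I_d * 'I_d)) b :
  \sum_(x in sym_pattern d) (2^-1 : R) ^+ mismatch P b x =
  #|sym_pattern d|%:R * (3 / 4) ^+ #|[pred p in upper d | P p]|.
Proof.
under eq_bigr => x _ do rewrite expr_sum.
rewrite (sum_sym_pattern_prod P (fun p c => (2^-1 : R) ^+ (c != b p))).
rewrite (eq_bigr (fun p => 2 * (if P p then 3 / 4 else 1))); last first.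
  by move=> p _; case: (P p); case: (b p); rewrite ?mulr1 /=; field.
rewrite big_split /= -big_mkcondr /= !prodr_const card_sym_pattern card_sig natrX.
by congr (_ ^+ _ * _ ^+ _); apply: eq_card.
Qed.

Section HalfPowers.

Variable R : realFieldType.

(* For H <= T + 1 this is 2^k >= k + 1 with k = T + 1 - H. *)
Lemma chord_halfpow (T H : nat) :
  (T + 2)%:R <= (H%:R : R) + 2 ^+ T.+1 * 2^-1 ^+ H.
Proof.
suff le_nat : ((T + 2) * 2 ^ H <= H * 2 ^ H + 2 ^ T.+1)%N.
  have pos2H : (0 : R) < 2 ^+ H by apply: exprn_gt0.
  rewrite exprVn -(ler_pM2r pos2H) mulrDl -mulrA mulVf ?gt_eqF // mulr1.
  by move: le_nat; rewrite -(ler_nat R) natrD !natrM !natrX.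
case: (leqP (T + 2) H) => [le_TH|lt_HT].
  exact: leq_trans (leq_mul le_TH (leqnn _)) (leq_addr _ _).
have [k eT] : exists k, T.+1 = (H + k)%N by exists (T.+1 - H)%N; lia.
have lt_k : (k < 2 ^ k)%N by rewrite ltn_expl.
rewrite eT expnD; nia.
Qed.

Lemma sum_ge_of_sum_halfpow (I : finType) (A : {pred I}) (H : I -> nat) (B : R)
    (T : nat) :
  \sum_(i in A) 2^-1 ^+ H i <= B ->
  #|A|%:R * (T + 2)%:R - 2 ^+ T.+1 * B <= \sum_(i in A) (H i)%:R.
Proof.
move=> le_B.
have le_chord : \sum_(i in A) ((T + 2)%:R : R) <=
    \sum_(i in A) ((H i)%:R + 2 ^+ T.+1 * 2^-1 ^+ H i).
  by apply: ler_sum => i _; apply: chord_halfpow.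
rewrite sumr_const big_split /= -big_distrr /= in le_chord.
have := ler_wpM2l (exprn_ge0 T.+1 (ler0n R 2)) le_B.
rewrite mulr_natl; lra.
Qed.

Lemma sum_encoded_le (I : finType) (A : {pred I}) (L : nat) (enc : I -> seq bool)
    (F : seq bool -> I -> R) :
  (forall s i, 0 <= F s i) -> (forall i, size (enc i) <= L)%N ->
  \sum_(i in A) F (enc i) i <= \sum_(s : {bseq L of bool}) \sum_(i in A) F s i.
Proof.
move=> F_ge0 enc_le; rewrite exchange_big /=; apply: ler_sum => i _.
pose s : {bseq L of bool} := Bseq (enc_le i).
by rewrite (bigD1 s) //= lerDl sumr_ge0.
Qed.

End HalfPowers.

Lemma card_bseq_bool_le L : (#|{: L.-bseq bool}| <= 2 ^ L.+1)%N.
Proof.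
rewrite card_bseq card_bool; elim: L => [|L IH]; first by rewrite big_ord1.
by rewrite big_ord_recr /= [in X in (_ <= X)%N]expnS mul2n -addnn leq_add2r.
Qed.

Section Clipping.

Variable R : realFieldType.

Lemma sign_mismatch_le_sqr_clip (w : R) (c : bool) :
  (c != (0 <= w))%:R <= clip (w - (if c then 1 else -1)) ^+ 2.
Proof.
rewrite /clip; case: c; case: (lerP 0 w) => w0 /=; rewrite ?sqr_ge0 //.
- rewrite (max_idPl _) ?(min_idPr _); [by rewrite sqrrN expr1n | lra | lra].
- rewrite (max_idPr _) ?(min_idPl _); [by rewrite expr1n | lra | lra].
Qed.

Definition in_col_range d : pred ('I_d * 'I_d) := fun p => p.2 \in col_range d.

Definition sign_guess d (v : 'I_d -> 'cV[R]_d) (p : 'I_d * 'I_d) : bool :=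
  0 <= v p.2 p.1 ord0.

Lemma mismatch_le_col_err d (v : 'I_d -> 'cV[R]_d) (x : {ffun 'I_d * 'I_d -> bool}) :
  (mismatch (@in_col_range d) (sign_guess v) x)%:R <=
  \sum_(j in col_range d) \sum_(i < d) clip (v j i ord0 - sign_mx R x i j) ^+ 2.
Proof.
pose err (p : 'I_d * 'I_d) := clip (v p.2 p.1 ord0 - sign_mx R x p.1 p.2) ^+ 2.
apply: (@le_trans _ _ (\sum_(p | in_col_range p) err p)).
  rewrite natr_sum big_mkcond [leRHS]big_mkcond /=; apply: ler_sum => p _.
  case: (in_col_range p); rewrite ?andbF ?andbT //.
  case: (p \in upper d); last exact: sqr_ge0.
  by case: p => i j; rewrite /err /sign_mx mxE; apply: sign_mismatch_le_sqr_clip.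
rewrite -(pair_big_dep xpredT (fun _ j => j \in col_range d) (fun i j => err (i, j))).
by rewrite exchange_big.
Qed.

End Clipping.

Lemma uphalf_bounds d : (d <= (uphalf d).*2 <= d.+1)%N.
Proof. by rewrite uphalf_half; have := odd_double_half d; case: odd => /=; lia. Qed.

Lemma sum_ord_geq n k : (\sum_(i < n) (k <= i))%N = (n - k)%N.
Proof.
elim: n => [|n IH]; first by rewrite big_ord0.
by rewrite big_ord_recr /= IH; case: (leqP k n) => /= ?; lia.
Qed.

Lemma card_col_range d : #|col_range d| = (d - (uphalf d).-1)%N.
Proof.
rewrite -sum1_card big_mkcond /= -sum_ord_geq; apply: eq_bigr => i _.
by rewrite inE; case: (uphalf d).
Qed.

Lemma sum_ord_leq n k : (\sum_(i < n) (i <= k))%N = minn n k.+1.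
Proof.
elim: n => [|n IH]; first by rewrite big_ord0 min0n.
by rewrite big_ord_recr /= IH; case: (leqP n k) => /= ?; lia.
Qed.

Lemma card_upper_col_range d :
  #|[pred p in upper d | in_col_range p]| =
  (\sum_(j < d) (uphalf d <= j.+1) * j.+1)%N.
Proof.
pose F (i j : 'I_d) := ((i <= j)%N && (j \in col_range d) : nat).
rewrite -sum1_card big_mkcond /= (eq_bigr (fun p => F p.1 p.2)); last by case.
rewrite -pair_bigA exchange_big /=; apply: eq_bigr => j _.
rewrite /F inE; case: (uphalf d <= j.+1)%N; last by rewrite big1 // => i; rewrite andbF.
by under eq_bigr do rewrite andbT; rewrite sum_ord_leq mul1n; apply/minn_idPr/ltn_ord.
Qed.

Lemma sum_tail_ge n h :
  (n * n.+1 <= 2 * \sum_(j < n) (h <= j.+1) * j.+1 + h.-1 * h)%N.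
Proof.
elim: n => [|n IH] //; rewrite big_ord_recr /=.
move: IH; set S := (\sum_(_ < n) _)%N => IH.
case: (leqP h n.+1) => [h_le | h_gt]; first by rewrite mul1n; nia.
have : (n.+1 * n.+2 <= h.-1 * h)%N by apply: leq_mul; lia.
rewrite mul0n; lia.
Qed.

Lemma sum_col_err_ge (R : realFieldType) d L (f : 'M[R]_d -> seq bool)
    (g : seq bool -> 'I_d -> 'cV[R]_d) (T : nat) :
  (forall M, size (f M) <= L)%N ->
  #|sym_pattern d|%:R * ((T + 2)%:R - 2 ^+ T.+1 * #|{: L.-bseq bool}|%:R *
      (3 / 4) ^+ #|[pred p in upper d | in_col_range p]|) <=
  \sum_(x in sym_pattern d) \sum_(j in col_range d) \sum_(i < d)
      clip (g (f (sign_mx R x)) j i ord0 - sign_mx R x i j) ^+ 2.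
Proof.
move=> f_le; set X := sym_pattern d; set m := #|[pred p in upper d | _]|.
pose H s x := mismatch (@in_col_range d) (sign_guess (g s)) x.
have le_halfpow : \sum_(x in X) (2^-1 : R) ^+ H (f (sign_mx R x)) x <=
    #|{: L.-bseq bool}|%:R * (#|X|%:R * (3 / 4) ^+ m).
  apply: le_trans (sum_encoded_le X (L := L) (enc := fun x => f (sign_mx R x))
    (F := fun s x => (2^-1 : R) ^+ H s x) _ _) _.
  - by move=> s x; rewrite exprn_ge0 ?invr_ge0.
  - by move=> x; apply: f_le.
  under eq_bigr do rewrite sum_halfpow_mismatch.
  by rewrite sumr_const -[leLHS]mulr_natl.
apply: le_trans (le_trans (sum_ge_of_sum_halfpow T le_halfpow) _).
  by lra.
by apply: ler_sum => x _; apply: mismatch_le_col_err.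
Qed.

Lemma chord_bound_small_dim (R : realFieldType) d nJ m : (0 < d <= 5)%N ->
  (nJ + uphalf d <= d.+1)%N -> (d * d.+1 <= 2 * m + (uphalf d).-1 * uphalf d)%N ->
  (nJ * d)%:R / 8 <= 2 - 2 * (3 / 4 : R) ^+ m.
Proof.
move=> /andP[d_gt0 d_le5] le_nJ le_m.
have pow_le k : (k <= m)%N -> (3 / 4 : R) ^+ m <= (3 / 4) ^+ k.
  by move=> le_km; apply: ler_wiXn2l => //; lra.
have nJ_le k : (nJ <= k)%N -> (nJ%:R : R) <= k%:R by move=> ?; rewrite ler_nat.
rewrite natrM; move: le_nJ le_m.
case: d d_gt0 d_le5 => [|[|[|[|[|[|d]]]]]] // _ _ /= le_nJ le_m.
- have := pow_le 1%N ltac:(lia); have := nJ_le 1%N ltac:(lia); rewrite !exprS; lra.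
- have := pow_le 3%N ltac:(lia); have := nJ_le 2%N ltac:(lia); rewrite !exprS; lra.
- have := pow_le 5%N ltac:(lia); have := nJ_le 2%N ltac:(lia); rewrite !exprS; lra.
- have := pow_le 9%N ltac:(lia); have := nJ_le 3%N ltac:(lia); rewrite !exprS; lra.
- have := pow_le 12%N ltac:(lia); have := nJ_le 3%N ltac:(lia); rewrite !exprS; lra.
Qed.

(* (4/3)^5 >= 4 *)
Lemma expn3_mul_expn4_le n : (3 ^ n * 4 ^ (n %/ 5) <= 4 ^ n)%N.
Proof.
rewrite {1 3}(divn_eq n 5); elim: (n %/ 5)%N => [|q IH].
  by rewrite mul0n add0n muln1; elim: (n %% 5)%N => [|r IHr] //; rewrite !expnS; lia.
rewrite mulSn -addnA [(3 ^ _)%N]expnD [(4 ^ (5 + _))%N]expnD [(4 ^ q.+1)%N]expnS; nia.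
Qed.

Lemma chord_bound_large_dim (R : realFieldType) d nJ m L N : (6 <= d)%N ->
  (128 * L <= d * d)%N -> (N <= 2 ^ L.+1)%N ->
  (nJ + uphalf d <= d.+1)%N -> (d * d.+1 <= 2 * m + (uphalf d).-1 * uphalf d)%N ->
  exists T, (nJ * d)%:R / 8 <= (T + 2)%:R - 2 ^+ T.+1 * N%:R * (3 / 4 : R) ^+ m.
Proof.
move=> d_ge6 le_L le_N le_nJ le_m.
set T := ((nJ * d + 7) %/ 8)%N; set q := (m %/ 5)%N.
have le_T : (nJ * d <= 8 * T)%N by rewrite /T; lia.
have le_q : (T + L + 1 <= 2 * q)%N.
  have := uphalf_bounds d; have : (nJ * d <= (d.+1 - uphalf d) * d)%N.
    by apply: leq_mul => //; lia.
  rewrite /T /q; nia.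
have le_nat : (2 ^ T.+1 * N * 3 ^ m <= 2 * 4 ^ m)%N.
  have le_pow2 : (2 ^ T.+1 * N <= 2 * 4 ^ q)%N.
    apply: leq_trans (leq_mul (leqnn _) le_N) _.
    have -> : (2 * 4 ^ q = 2 ^ (2 * q).+1)%N by rewrite expnS expnM.
    by rewrite -expnD leq_exp2l //; lia.
  have := expn3_mul_expn4_le m; rewrite -/q; nia.
exists T; have pos4m : (0 : R) < 4 ^+ m by apply: exprn_gt0.
have le_2 : 2 ^+ T.+1 * N%:R * (3 / 4 : R) ^+ m <= 2.
  rewrite expr_div_n mulrA ler_pdivrMr //.
  by move: le_nat; rewrite -(ler_nat R) !natrM !natrX.
move: le_T; rewrite -(ler_nat R) natrM natrD; lra.
Qed.

Theorem mainTheorem12 (R : realFieldType) (d : nat) (hd : (1 <= d)%N)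
  (f : 'M[R]_d -> seq bool) (g : seq bool -> 'I_d -> 'cV[R]_d)
  (hf : forall M : 'M[R]_d, (size (f M) * 128 <= d ^ 2)%N) :
  exp_err f g >= d%:R / 8.
Proof.
set L := (d ^ 2 %/ 128)%N; set nJ := #|col_range d|.
set m := #|[pred p in upper d | in_col_range p]|.
have f_le M : (size (f M) <= L)%N by rewrite leq_divRL // hf.
have le_L : (128 * L <= d * d)%N by rewrite mulnC -leq_divRL.
have le_nJ : (nJ + uphalf d <= d.+1)%N.
  by rewrite /nJ card_col_range; have := uphalf_bounds d; lia.
have le_m : (d * d.+1 <= 2 * m + (uphalf d).-1 * uphalf d)%N.
  by rewrite /m card_upper_col_range sum_tail_ge.
suff [T le_T] : exists T, (nJ * d)%:R / 8 <=
    (T + 2)%:R - 2 ^+ T.+1 * #|{: L.-bseq bool}|%:R * (3 / 4 : R) ^+ m.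
  have nJ_gt0 : (0 < nJ)%N by rewrite /nJ card_col_range; have := uphalf_bounds d; lia.
  have X_gt0 : (0 < #|sym_pattern d|)%N by rewrite card_sym_pattern expn_gt0.
  rewrite /exp_err -mulrA !ler_pdivlMl ?ltr0n //.
  apply: le_trans (le_trans (ler_wpM2l (ler0n _ _) le_T) (sum_col_err_ge g T f_le)).
  by rewrite natrM; lra.
case: (leqP d 5) => [d_le5 | d_gt5].
  exists 0%N; have L0 : L = 0%N by rewrite /L divn_small // expnS expn1; nia.
  rewrite L0 card_bseq big_ord1 add0n mulr1; apply: chord_bound_small_dim => //.
  by rewrite hd d_le5.
exact: chord_bound_large_dim d_gt5 le_L (card_bseq_bool_le L) le_nJ le_m.
Qed.
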